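(* Every finitely generated centrally endo-AIP $\mathbb{Z}$-module is torsion-free or semisimple.
   Context: For a module $M$ with $S=\mathrm{End}(M)$ and $N\le M$, $l_S(N)=\{\phi\in S:\phi(N)=0\}$. An ideal $I$ of $S$ is centrally s-unital if for every $a\in I$ there is $z\in I$ central in $S$ with $az=a$. $M$ is centrally endo-AIP if $l_S(N)$ is a centrally s-unital ideal of $S$ for every fully invariant submodule $N$ of $M$. *)

(* A Z-module is an abelian group, i.e. a zmodType. *)
From mathcomp Require Import all_boot all_order all_algebra.
Set Implicit Arguments. Unset Strict Implicit. Unset Printing Implicit Defensive.
Import GRing.Theory.
Local Open Scope ring_scope.

Section ZMod.
Variable M : zmodType.

(* Endomorphisms of the Z-module M: additive maps M -> M
   (additivity implies Z-linearity). *)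
Definition is_endo (f : M -> M) : Prop := forall x y, f (x + y) = f x + f y.

Definition is_submodule (N : M -> Prop) : Prop :=
  N 0 /\ forall x y, N x -> N y -> N (x - y).

Definition fully_invariant (N : M -> Prop) : Prop :=
  is_submodule N /\ forall f, is_endo f -> forall x, N x -> N (f x).

Definition lann (N : M -> Prop) (f : M -> M) : Prop :=
  is_endo f /\ forall x, N x -> f x = 0.

(* z is central in S = End(M) (equality of endomorphisms is pointwise). *)
Definition central_endo (z : M -> M) : Prop :=
  is_endo z /\ forall g, is_endo g -> forall x, z (g x) = g (z x).

(* An ideal I of S is centrally s-unital: for every a in I there is z in I,
   central in S, with a z = a (product in S = composition). *)
Definition centrally_s_unital (I : (M -> M) -> Prop) : Prop :=
  forall a, I a -> exists z, I z /\ central_endo z /\ (forall x, a (z x) = a x).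

Definition centrally_endo_AIP : Prop :=
  forall N, fully_invariant N -> centrally_s_unital (lann N).

Definition fin_gen : Prop :=
  exists (n : nat) (g : 'I_n -> M),
    forall x, exists c : 'I_n -> int, x = \sum_(i < n) (g i *~ c i).

Definition torsion_free : Prop :=
  forall (x : M) (n : nat), (0 < n)%N -> x *+ n = 0 -> x = 0.

Definition semisimple : Prop :=
  forall N, is_submodule N ->
    exists K, is_submodule K /\ (forall x, N x -> K x -> x = 0) /\
      (forall x, exists a b, N a /\ K b /\ x = a + b).
End ZMod.

(* If N is fully invariant, a lies in l_S(N) and a(M) is contained in N, then
   a = 0: a central z in l_S(N) with a z = a gives a = z a, and z kills a(M).
   Apply this to endomorphisms x |-> psi(x) t, where p t = 0, t lies in N and
   psi : M -> Z/p is additive and vanishes on N.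
   If M is not torsion-free it has such a t != 0, which lies in the torsion
   submodule T.  With N = T: an element of infinite order would give a nonzero
   homomorphism M/T -> Z, still nonzero modulo p after dividing it by a power
   of p, so M is torsion, hence of finite exponent.
   With N = pM: if p^2 u = 0 but w = p u != 0, then M != pM (otherwise w would
   be divisible by every power of p) and M/pM carries a nonzero psi, with
   t = w in pM.  So all element orders of M are square-free; then for every
   submodule S and every x, the order d of x modulo S is coprime to its
   cofactor e, <e x> meets S trivially and x lies in S + <e x>.  Adding the
   generators one at a time builds a complement of any submodule. *)

From mathcomp Require Import all_boot all_order all_algebra boolp.
Set Implicit Arguments. Unset Strict Implicit. Unset Printing Implicit Defensive.
Import GRing.Theory Num.Theory.
Local Open Scope ring_scope.

Section Submodules.
Variable M : zmodType.
Implicit Types (f : M -> M) (N K : M -> Prop) (x y : M).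

Lemma endo0 f : is_endo f -> f 0 = 0.
Proof. by move=> fD; apply: (addrI (f 0)); rewrite -fD !addr0. Qed.

Lemma endoMn f : is_endo f -> forall x n, f (x *+ n) = f x *+ n.
Proof.
move=> fD x; elim=> [|n IHn]; first by rewrite !mulr0n endo0.
by rewrite !mulrS fD IHn.
Qed.

Lemma submod0 N : is_submodule N -> N 0.
Proof. by case. Qed.

Lemma submodB N : is_submodule N -> forall x y, N x -> N y -> N (x - y).
Proof. by case. Qed.

Lemma submodN N : is_submodule N -> forall x, N x -> N (- x).
Proof. by move=> subN x Nx; rewrite -sub0r; apply: submodB (submod0 subN) Nx. Qed.

Lemma submodD N : is_submodule N -> forall x y, N x -> N y -> N (x + y).
Proof.
by move=> subN x y Nx Ny; rewrite -[y]opprK; apply: submodB (submodN subN Ny).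
Qed.

Lemma submodMn N : is_submodule N -> forall x n, N x -> N (x *+ n).
Proof.
move=> subN x n Nx; elim: n => [|n IHn]; first by rewrite mulr0n; apply: submod0.
by rewrite mulrS; apply: submodD.
Qed.

Lemma submodMz N : is_submodule N -> forall x m, N x -> N (x *~ m).
Proof.
move=> subN x [m|m] Nx; first exact: submodMn.
by rewrite NegzE mulrNz; apply: (submodN subN); apply: submodMn.
Qed.

Lemma submod_sum N n (g : 'I_n -> M) : is_submodule N ->
  (forall i, N (g i)) -> forall c : 'I_n -> int, N (\sum_(i < n) g i *~ c i).
Proof.
move=> subN Ng c; elim/big_ind: _ => [|x y|i _]; first exact: submod0.
  exact: submodD.
exact: submodMz.
Qed.

Lemma submod_eq0 : is_submodule (fun x : M => x = 0).
Proof. by split=> // x y -> ->; rewrite subrr. Qed.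

Definition sum_submod N K x := exists a b, N a /\ K b /\ x = a + b.

Lemma submod_sum_submod N K :
  is_submodule N -> is_submodule K -> is_submodule (sum_submod N K).
Proof.
move=> subN subK; split; first by exists 0, 0; rewrite addr0; do !split; apply: submod0.
move=> _ _ [a [b [Na [Kb ->]]]] [a' [b' [Na' [Kb' ->]]]].
exists (a - a'), (b - b'); rewrite opprD addrACA; split; [|split] => //; exact: submodB.
Qed.

Definition cyclic_submod (h x : M) := exists m, x = h *~ m.

Lemma submod_cyclic h : is_submodule (cyclic_submod h).
Proof.
split; first by exists 0; rewrite mulr0z.
by move=> _ _ [m ->] [m' ->]; exists (m - m'); rewrite mulrzBr.
Qed.

Definition torsion x := exists2 n, (0 < n)%N & x *+ n = 0.

Lemma torsion_fully_invariant : fully_invariant torsion.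
Proof.
split=> [|f fD x [n n_gt0 xn0]]; last by exists n; rewrite // -endoMn // xn0 endo0.
split=> [|x y [n n_gt0 xn0] [m m_gt0 ym0]]; first by exists 1%N.
exists (n * m)%N; first by rewrite muln_gt0 n_gt0.
by rewrite mulrnBl mulrnA xn0 mul0rn mulnC mulrnA ym0 mul0rn subrr.
Qed.

Definition multiples (p : nat) x := exists y, x = y *+ p.

Lemma multiples_fully_invariant p : fully_invariant (multiples p).
Proof.
split=> [|f fD _ [y ->]]; last by exists (f y); rewrite endoMn.
split=> [|_ _ [y ->] [z ->]]; first by exists 0; rewrite mul0rn.
by exists (y - z); rewrite mulrnBl.
Qed.

End Submodules.

Section Orders.
Variable M : zmodType.
Implicit Types (S : M -> Prop) (x : M).

Lemma mulrz_dvd_eq0 x a b : x *~ a = 0 -> (a %| b)%Z -> x *~ b = 0.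
Proof. by move=> xa0 /dvdzP [c ->]; rewrite mulrC mulrzA xa0 mul0rz. Qed.

Lemma mulrz_coprime_eq0 x a b : x *~ a = 0 -> x *~ b = 0 -> coprimez a b -> x = 0.
Proof.
move=> xa0 xb0 /coprimezP [[u v] /= uv1].
rewrite -[x]mulr1z -uv1 mulrzDr [u * a]mulrC [v * b]mulrC !mulrzA.
by rewrite xa0 xb0 !mul0rz addr0.
Qed.

Lemma exists_order_mod S x : is_submodule S -> (exists2 n, (0 < n)%N & S (x *+ n)) ->
  exists2 d, (0 < d)%N & forall k : int, S (x *~ k) <-> (d%:Z %| k)%Z.
Proof.
move=> subS [n n_gt0 Sxn].
have exP : exists d, (0 < d)%N && `[< S (x *+ d) >].
  by exists n; rewrite n_gt0; apply/asboolP.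
case: (ex_minnP exP) => d /andP [d_gt0 /asboolP Sxd] d_min.
exists d => // k; split=> [Sxk|/dvdzP [c ->]]; last first.
  by rewrite mulrC mulrzA -pmulrn; apply: submodMz.
have d_pos : 0 < d%:Z by rewrite ltz_nat.
have Sxr : S (x *~ (k %% d)%Z).
  rewrite [(k %% d)%Z]/modz mulrzBr -mulrzA_C -pmulrn.
  by apply: submodB => //; apply: submodMz.
have r_ge0 : 0 <= (k %% d)%Z by rewrite modz_ge0 // lt0r_neq0.
have /gez0_abs r_eq := r_ge0; apply/dvdz_mod0P; rewrite -r_eq.
case: `|(k %% d)%Z|%N r_eq => [//|r] r_eq; have := ltz_pmod k d_pos.
rewrite -r_eq ltz_nat ltnNge d_min //; apply/andP; split => //.
by apply/asboolP; rewrite pmulrn r_eq.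
Qed.

Definition has_order x (o : nat) := forall k : int, x *~ k = 0 <-> (o%:Z %| k)%Z.

Lemma exists_order x : torsion x -> exists2 o, (0 < o)%N & has_order x o.
Proof. exact: exists_order_mod (submod_eq0 M). Qed.

Lemma order_div_prime_neq0 x o p :
  (0 < o)%N -> has_order x o -> prime p -> (p %| o)%N -> x *+ (o %/ p) != 0.
Proof.
move=> o_gt0 xo p_pr p_o; apply/eqP; rewrite pmulrn => /xo; rewrite dvdzE !absz_nat.
have q_gt0 : (0 < o %/ p)%N by rewrite divn_gt0 ?prime_gt0 // dvdn_leq.
by move/(dvdn_leq q_gt0); rewrite leqNgt ltn_Pdiv ?prime_gt1.
Qed.

Lemma not_torsion_free_prime : ~ torsion_free M ->
  exists p (t : M), [/\ prime p, t != 0 & t *+ p = 0].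
Proof.
move=> /existsNP [x /existsNP [k /not_implyP [k_gt0 /not_implyP [xk0 x_neq0]]]].
have [o o_gt0 xo] := exists_order (ex_intro2 _ _ k k_gt0 xk0).
have o_gt1 : (1 < o)%N.
  rewrite ltn_neqAle eq_sym o_gt0 andbT; apply: contra_notN x_neq0 => /eqP o1.
  by rewrite -[x]mulr1z xo o1 dvd1z.
exists (pdiv o), (x *+ (o %/ pdiv o)); split; first exact: pdiv_prime.
  by rewrite order_div_prime_neq0 ?pdiv_prime ?pdiv_dvd.
by rewrite -mulrnA divnK ?pdiv_dvd // pmulrn xo.
Qed.

End Orders.

Section LinearFunctional.
Variables (M : zmodType) (n : nat) (g : 'I_n -> M).
Hypothesis g_gen : forall x, exists c : 'I_n -> int, x = \sum_(i < n) g i *~ c i.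
Variables (H : M -> Prop) (q : nat).
Hypotheses (subH : is_submodule H) (q_prime0 : q = 0%N \/ prime q).
Hypothesis qM_H : forall x, H (x *~ q%:Z).

(* Maps to Z/qZ are represented by maps [M -> int] additive modulo [q]; for
   [q = 0] they are homomorphisms to Z.  A functional vanishing on [H] is read
   off from a maximal set [S] of generators independent modulo [H] and [q]:
   for a common multiplier [D] prime to [q], every [x *~ D] is, modulo [H], a
   combination of [S] whose coefficients are unique modulo [q]. *)

Local Notation dvdq m := (q%:Z %| m)%Z.
Implicit Types (c e : 'I_n -> int) (S : {set 'I_n}).

Lemma ndvdq1 : ~~ dvdq 1.
Proof. by rewrite dvdzE absz_nat; case: q_prime0 => [-> //|/Euclid_dvd1 ->]. Qed.

Lemma ndvdq_prod (I : finType) (m : I -> int) :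
  (forall i, ~~ dvdq (m i)) -> ~~ dvdq (\prod_i m i).
Proof.
move=> ndvd_m; elim/big_ind: _ => // [|a b]; first exact: ndvdq1.
rewrite !dvdzE abszM absz_nat; case: q_prime0 => [->|q_pr].
  by rewrite !dvd0n muln_eq0 => /negbTE -> /negbTE ->.
by rewrite Euclid_dvdM // => /negbTE -> /negbTE ->.
Qed.

Definition comb c := \sum_(i < n) g i *~ c i.

Lemma combD c c' : comb (c \+ c') = comb c + comb c'.
Proof. by rewrite -big_split; apply: eq_bigr => i _; rewrite mulrzDr. Qed.

Lemma combN c : comb (fun i => - c i) = - comb c.
Proof. by rewrite -sumrN; apply: eq_bigr => i _; rewrite mulrNz. Qed.

Lemma combB c c' : comb (c \- c') = comb c - comb c'.
Proof. by rewrite -combN -combD. Qed.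

Lemma combMz c k : comb (fun i => c i * k) = comb c *~ k.
Proof. by rewrite /comb mulrz_suml; apply: eq_bigr => i _; rewrite mulrzA. Qed.

Lemma comb_delta k a : comb (fun i => if i == k then a else 0) = g k *~ a.
Proof.
rewrite /comb (bigD1 k) //= eqxx big1 ?addr0 // => i /negbTE ->; exact: mulr0z.
Qed.

Definition supported S c := forall i, i \notin S -> c i = 0.

Lemma comb_supported0 c : supported set0 c -> comb c = 0.
Proof. by move=> c0; apply: big1 => i _; rewrite c0 ?in_set0 ?mulr0z. Qed.

Lemma supported_delta S k a : k \in S -> supported S (fun i => if i == k then a else 0).
Proof. by move=> kS i iS; case: eqP => // ik; rewrite ik kS in iS. Qed.

Definition independent S := forall c, supported S c -> H (comb c) -> forall i, dvdq (c i).

Lemma exists_maximal_independent :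
  exists2 S, independent S & forall k, k \notin S -> ~ independent (k |: S).
Proof.
have indep0 : `[< independent set0 >].
  by apply/asboolP => c c0 _ i; rewrite c0 ?in_set0 ?dvdz0.
have [S /maxsetP [/asboolP indS S_max]] :=
  @ex_maxset _ (fun S => `[< independent S >]) (ex_intro _ set0 indep0).
exists S => // k kS /asboolP/S_max/(_ (subsetUr _ _)) kSS.
by rewrite -kSS setU11 in kS.
Qed.

Lemma dependent_generator S k : independent S -> ~ independent (k |: S) ->
  exists m c, [/\ ~~ dvdq m, supported S c & H (g k *~ m - comb c)].
Proof.
move=> indS /existsNP [c /not_implyP [c_supp /not_implyP [Hc /existsNP [i ndvd_ci]]]].
pose c' j := if j == k then 0 else c j.
have c'_supp : supported S c'.
  move=> j jS; rewrite /c'; case: eqP => // /eqP jk.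
  by apply: c_supp; rewrite in_setU1 negb_or jk.
have comb_c : comb c = g k *~ c k + comb c'.
  rewrite -comb_delta -combD; congr comb; apply/funext => j /=.
  by rewrite /c'; case: eqP => [->|]; rewrite ?addr0 ?add0r.
have [dvd_ck|ndvd_ck] := boolP (dvdq (c k)).
  have Hgk : H (g k *~ c k) by case/dvdzP: dvd_ck => r ->; rewrite mulrzA.
  have Hc' : H (comb c').
    by rewrite -[comb c'](addKr (g k *~ c k)) -comb_c addrC; apply: submodB.
  case: ndvd_ci; have := indS c' c'_supp Hc' i.
  by rewrite /c'; case: eqP => [->|].
exists (c k), (fun j => - c' j); split=> //; first by move=> j /c'_supp ->; rewrite oppr0.
by rewrite combN opprK -comb_c.
Qed.

Lemma common_denominator S :
  independent S -> (forall k, k \notin S -> ~ independent (k |: S)) ->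
  exists2 D, ~~ dvdq D & forall x, exists e, supported S e /\ H (x *~ D - comb e).
Proof.
move=> indS S_max.
have gen k : exists m c, [/\ ~~ dvdq m, supported S c & H (g k *~ m - comb c)].
  have [kS|/S_max/(dependent_generator indS)//] := boolP (k \in S).
  exists 1, (fun i => if i == k then 1 else 0).
  split; [exact: ndvdq1 | exact: supported_delta |].
  by rewrite comb_delta subrr; apply: submod0.
have [m /choice [c mcP]] := choice gen.
exists (\prod_k m k); first by apply: ndvdq_prod => k; case: (mcP k).
pose P x := exists e, supported S e /\ H (x *~ (\prod_k m k) - comb e).
have subP : is_submodule P.
  split.
    exists (fun=> 0); split=> //; rewrite mul0rz comb_supported0 ?subrr //.
    exact: submod0.
  move=> x z [e [e_supp He]] [e' [e'_supp He']]; exists (e \- e'); split.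
    by move=> i iS /=; rewrite e_supp ?e'_supp ?subrr.
  by rewrite combB mulrzBl opprD addrACA -opprD; apply: submodB.
move=> x; change (P x); have [a ->] := g_gen x; apply: (submod_sum subP) => k.
have [_ c_supp Hk] := mcP k.
exists (fun i => c k i * \prod_(j | j != k) m j); split.
  by move=> i /c_supp ->; rewrite mul0r.
by rewrite combMz (bigD1 k) //= mulrzA -mulrzBl; apply: submodMz.
Qed.

Lemma independent_coord_unique S y e e' : independent S ->
  supported S e -> supported S e' -> H (y - comb e) -> H (y - comb e') ->
  forall i, dvdq (e i - e' i).
Proof.
move=> indS e_supp e'_supp He He'; apply: (indS (e \- e')).
  by move=> i iS /=; rewrite e_supp ?e'_supp ?subrr.
have -> : comb (e \- e') = (y - comb e') - (y - comb e).
  by rewrite combB opprB [in RHS]addrC addrA subrK.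
exact: submodB.
Qed.

Lemma exists_functional y : (forall m, ~~ dvdq m -> ~ H (y *~ m)) ->
  exists psi : M -> int, [/\ forall x z, dvdq (psi (x + z) - (psi x + psi z)),
    forall x, H x -> dvdq (psi x) & exists y', ~~ dvdq (psi y')].
Proof.
move=> y_free; have [S indS S_max] := exists_maximal_independent.
have [D ndvdD /choice [e eP]] := common_denominator indS S_max.
have coord_unique := independent_coord_unique indS.
have [i0 i0S] : exists i0, i0 \in S.
  apply: contrapT => /forallNP S0; apply: (y_free D ndvdD).
  have [e_supp] := eP y; rewrite comb_supported0 ?subr0 // => i _.
  by apply: e_supp; apply/negP; apply: S0.
exists (fun x => e x i0); split.
- move=> x z; have [ex_supp Hx] := eP x; have [ez_supp Hz] := eP z.
  have [exz_supp Hxz] := eP (x + z).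
  apply: (coord_unique ((x + z) *~ D) _ (e x \+ e z) exz_supp) => //.
    by move=> i iS /=; rewrite ex_supp ?ez_supp ?addr0.
  by rewrite combD mulrzDl opprD addrACA; apply: submodD.
- move=> x Hx; have [ex_supp Hex] := eP x; rewrite -[e x i0]subr0.
  apply: (coord_unique (x *~ D) _ (fun=> 0) ex_supp) => //.
  by rewrite comb_supported0 // subr0; apply: submodMz.
exists (g i0); apply: contra ndvdD => dvd_e.
have [e_supp He] := eP (g i0).
have := coord_unique _ _ _ e_supp (supported_delta D i0S) He.
rewrite comb_delta subrr => /(_ (submod0 subH) i0); rewrite eqxx => dvd_eD.
by rewrite -(subKr (e (g i0) i0) D) rpredB.
Qed.

End LinearFunctional.

Lemma rescale_functional (M : zmodType) p (psi : M -> int) y :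
  prime p -> {morph psi : x z / x + z} -> psi y != 0 ->
  exists psi' : M -> int, [/\ {morph psi' : x z / x + z},
    forall x, psi x = 0 -> psi' x = 0 & exists y', ~~ (p%:Z %| psi' y')%Z].
Proof.
move=> p_pr; move: {2}`|psi y|%N (leqnn `|psi y|%N) => N.
elim: N psi => [|N IHN] psi le_psiy_N psiD psiy_neq0.
  by move: le_psiy_N; rewrite leqn0 absz_eq0 (negbTE psiy_neq0).
have [[y' ndvd]|all_dvd] := pselect (exists y', ~~ (p%:Z %| psi y')%Z).
  by exists psi; split=> //; exists y'.
have dvd_psi x : (p%:Z %| psi x)%Z by apply/negPn/negP => nd; apply: all_dvd; exists x.
pose psi2 x := (psi x %/ p)%Z.
have psiE x : psi x = psi2 x * p by rewrite divzK.
have psi2y_neq0 : psi2 y != 0 by apply: contraNneq psiy_neq0; rewrite psiE => ->.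
have [psi' [psi'D psi'0 ndvd]] : exists psi' : M -> int, [/\ {morph psi' : x z / x + z},
    forall x, psi2 x = 0 -> psi' x = 0 & exists y', ~~ (p%:Z %| psi' y')%Z].
  apply: IHN => // [|x z]; last by rewrite /psi2 psiD divzDl.
  have lt_psi2 : (`|psi2 y| < `|psi2 y| * p)%N by rewrite ltn_Pmulr ?prime_gt1 ?absz_gt0.
  by rewrite -ltnS (leq_trans lt_psi2) // -(absz_nat p) -abszM -psiE.
by exists psi'; split=> // x psix0; apply: psi'0; rewrite /psi2 psix0 div0z.
Qed.

Section CentrallySUnital.
Variable M : zmodType.
Implicit Types (N : M -> Prop) (a : M -> M) (x y t u : M).

Lemma s_unital_lann_image_eq0 N a : centrally_s_unital (lann N) -> lann N a ->
  (forall x, N (a x)) -> forall x, a x = 0.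
Proof.
move=> unitN [aD aN] Na x; have [z [[_ zN] [[_ z_central] az]]] := unitN a (conj aD aN).
by rewrite -az -(z_central a aD) zN.
Qed.

Lemma s_unital_functional_dvd N p t (psi : M -> int) :
  is_submodule N -> centrally_s_unital (lann N) -> prime p ->
  N t -> t != 0 -> t *+ p = 0 ->
  (forall x y, (p%:Z %| psi (x + y) - (psi x + psi y))%Z) ->
  (forall x, N x -> (p%:Z %| psi x)%Z) -> forall x, (p%:Z %| psi x)%Z.
Proof.
move=> subN unitN p_pr Nt t_neq0 /[!pmulrn] tp0 psiD psiN.
pose a x := t *~ psi x.
have aD : is_endo a.
  move=> x y; apply/eqP; rewrite /a -mulrzDr -subr_eq0 -mulrzBr.
  by rewrite (mulrz_dvd_eq0 tp0 (psiD x y)).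
have aN : lann N a by split=> // x /psiN; apply: mulrz_dvd_eq0.
have a0 := s_unital_lann_image_eq0 unitN aN (fun x => submodMz subN (psi x) Nt).
move=> x; apply: contraR t_neq0 => ndvd; apply/eqP.
apply: mulrz_coprime_eq0 tp0 (a0 x) _.
by rewrite coprimezE absz_nat prime_coprime // -dvdzE.
Qed.

Lemma torsion_mulrz x m : m != 0 -> torsion (x *~ m) -> torsion x.
Proof.
move=> m_neq0 [k k_gt0 xmk0]; exists (`|m| * k)%N.
  by rewrite muln_gt0 absz_gt0 m_neq0.
by rewrite pmulrn PoszM abszEsg [_ * m]mulrC mulrAC !mulrzA -pmulrn xmk0 mul0rz.
Qed.

Lemma fg_torsion_of_prime_torsion p t :
  fin_gen M -> centrally_s_unital (lann (@torsion M)) ->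
  prime p -> t != 0 -> t *+ p = 0 -> forall y, torsion y.
Proof.
move=> [n [g g_gen]] unitT p_pr t_neq0 tp0 y; apply: contrapT => y_tors.
have subT := (torsion_fully_invariant M).1.
have y_free m : ~~ (0%:Z %| m)%Z -> ~ torsion (y *~ m).
  by rewrite dvd0z => m_neq0 /(torsion_mulrz m_neq0).
have qM_T x : torsion (x *~ 0%:Z) by exists 1%N; rewrite // mulr0z.
have [psi [psiD psiT [y' psiy']]] :=
  exists_functional g_gen subT (or_introl erefl) qM_T y_free.
have psiD' : {morph psi : x z / x + z}.
  by move=> x z; apply/eqP; rewrite -subr_eq0 -dvd0z psiD.
have psiy'_neq0 : psi y' != 0 by rewrite -dvd0z.
have [psi' [psi'D psi'0 [y'' ndvd]]] := rescale_functional p_pr psiD' psiy'_neq0.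
apply: (negP ndvd); apply: (s_unital_functional_dvd subT unitT p_pr _ t_neq0 tp0).
- by exists p; rewrite ?prime_gt0.
- by move=> x z; rewrite psi'D subrr dvdz0.
by move=> x /psiT; rewrite dvd0z => /eqP /psi'0 ->; rewrite dvdz0.
Qed.

Lemma fg_exponent : fin_gen M -> (forall x, torsion x) ->
  exists2 e, (0 < e)%N & forall x, x *+ e = 0.
Proof.
move=> [n [g g_gen]] Mtors.
have [o o_gt0 go0] := fin_all_exists2 (fun i => Mtors (g i)).
exists (\prod_i o i)%N; first by rewrite prodn_gt0.
have subE : is_submodule (fun x => x *+ (\prod_i o i) = 0).
  by split=> [|x z x0 z0]; rewrite ?mul0rn // mulrnBl x0 z0 subrr.
move=> x; have [c ->] := g_gen x; apply: (submod_sum subE) => i.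
by rewrite (bigD1 i) //= mulrnA go0 mul0rn.
Qed.

Lemma exists_not_multiple p (w : M) :
  prime p -> (exists2 e, (0 < e)%N & forall x, x *+ e = 0) ->
  w != 0 -> w *+ p = 0 -> exists y : M, ~ multiples p y.
Proof.
move=> p_pr [e e_gt0 Me0] w_neq0 wp0; apply: contrapT => no_y.
have pM y : multiples p y by apply: contrapT => ny; apply: no_y; exists y.
have pkM k y : multiples (p ^ k) y.
  elim: k y => [|k IHk] y; first by exists y; rewrite expn0 mulr1n.
  by have [z ->] := IHk y; have [z' ->] := pM z; exists z'; rewrite expnS mulrnA.
have [e' cop_pe' eE] := pfactor_coprime p_pr e_gt0.
have [v wE] := pkM (logn p e) w.
move/eqP: w_neq0; apply; apply: (mulrz_coprime_eq0 (a := p) (b := e')).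
- by rewrite -pmulrn.
- by rewrite -pmulrn wE -mulrnA mulnC -eE Me0.
by rewrite coprimezE !absz_nat.
Qed.

Lemma fg_prime_sq_torsion p u : fin_gen M -> (forall x, torsion x) ->
  centrally_s_unital (lann (@multiples M p)) -> prime p ->
  u *+ (p * p) = 0 -> u *+ p = 0.
Proof.
move=> Mfg Mtors unitP p_pr upp0; apply/eqP/negPn/negP => w_neq0.
have wp0 : u *+ p *+ p = 0 by rewrite -mulrnA.
have [y0 y0_nmult] := exists_not_multiple p_pr (fg_exponent Mfg Mtors) w_neq0 wp0.
have y0_free m : ~~ (p%:Z %| m)%Z -> ~ multiples p (y0 *~ m).
  move=> ndvd [v y0m]; apply: y0_nmult.
  have /coprimezP [[a b] /= ab1] : coprimez p m.
    by rewrite coprimezE absz_nat prime_coprime // -dvdzE.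
  exists (y0 *~ a + v *~ b).
  rewrite -[y0 in LHS]mulr1z -ab1 mulrzDr [b * m]mulrC !mulrzA y0m.
  by rewrite mulrnDl !pmulrn mulrzAC [v *~ p *~ b]mulrzAC.
have subP := (multiples_fully_invariant M p).1.
have qM_P x : multiples p (x *~ p%:Z) by exists x; rewrite pmulrn.
case: Mfg => [n [g g_gen]].
have [psi [psiD psiP [y' ndvd]]] :=
  exists_functional g_gen subP (or_intror p_pr) qM_P y0_free.
apply: (negP ndvd).
apply: (s_unital_functional_dvd subP unitP p_pr _ w_neq0 wp0 psiD psiP).
by exists u.
Qed.

End CentrallySUnital.

Section SquareFreeExponent.
Variable M : zmodType.
Hypothesis sqfree : forall p (u : M), prime p -> u *+ (p * p) = 0 -> u *+ p = 0.
Implicit Types (S N K : M -> Prop) (x : M).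

Lemma order_sqfree x o p : (0 < o)%N -> has_order x o -> prime p -> ~~ (p * p %| o)%N.
Proof.
move=> o_gt0 xo p_pr; apply/negP => ppo.
have : x *+ (o %/ (p * p)) *+ (p * p) = 0 by rewrite -mulrnA divnK // pmulrn xo.
move/(sqfree p_pr)/eqP; apply/negP; rewrite -mulrnA.
have -> : (o %/ (p * p) * p = o %/ p)%N.
  by rewrite -{2}(divnK ppo) mulnA mulnK // prime_gt0.
by rewrite order_div_prime_neq0 // (dvdn_trans (dvdn_mulr p (dvdnn p)) ppo).
Qed.

Lemma order_coprime_cofactor x o d : (0 < o)%N -> has_order x o -> (d %| o)%N ->
  coprime d (o %/ d).
Proof.
move=> o_gt0 xo d_o; apply/negPn/negP => ncop.
have d_gt0 : (0 < d)%N by apply: dvdn_gt0 d_o.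
have gcd_gt1 : (1 < gcdn d (o %/ d))%N.
  by rewrite ltn_neqAle eq_sym ncop gcdn_gt0 d_gt0.
set r := pdiv (gcdn d (o %/ d)).
have r_d : (r %| d)%N := dvdn_trans (pdiv_dvd _) (dvdn_gcdl d (o %/ d)).
have r_od : (r %| o %/ d)%N := dvdn_trans (pdiv_dvd _) (dvdn_gcdr d (o %/ d)).
apply: (negP (order_sqfree o_gt0 xo (pdiv_prime gcd_gt1))).
by apply: dvdn_trans (dvdn_mul r_d r_od) _; rewrite mulnC divnK.
Qed.

Lemma cyclic_complement S x : is_submodule S -> torsion x ->
  exists h, (forall m, S (h *~ m) -> h *~ m = 0) /\ sum_submod S (cyclic_submod h) x.
Proof.
move=> subS x_tors; have [o o_gt0 xo] := exists_order x_tors.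
have Sxo : S (x *+ o) by rewrite pmulrn (proj2 (xo o) (dvdzz _)); apply: submod0.
have [d d_gt0 xdS] := exists_order_mod subS (ex_intro2 _ _ o o_gt0 Sxo).
have d_o : (d %| o)%N by rewrite -(absz_nat d) -(absz_nat o) -dvdzE -xdS -pmulrn.
have cop : coprimez d (o %/ d)%N.
  by rewrite coprimezE !absz_nat (order_coprime_cofactor o_gt0 xo).
have /coprimezP [[u v] /= uv1] := cop.
have oE : o%:Z = (o %/ d)%N%:Z * d by rewrite -PoszM divnK.
exists (x *~ (o %/ d)%N); split.
  move=> m; rewrite -mulrzA => /xdS d_em; apply/xo.
  rewrite oE dvdz_mul2l; last by rewrite eqz_nat -lt0n divn_gt0 // dvdn_leq.
  by rewrite -(Gauss_dvdzr _ cop).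
exists (x *~ d *~ u), (x *~ (o %/ d)%N *~ v); split.
  by apply: (submodMz subS); apply/(xdS d)/dvdzz.
split; first by exists v.
by rewrite !mulrzA_C -mulrzDr uv1 mulr1z.
Qed.

Lemma complement_covering N (s : seq M) : is_submodule N -> (forall x, torsion x) ->
  exists K, [/\ is_submodule K, forall x, N x -> K x -> x = 0
              & {in s, forall x, sum_submod N K x}].
Proof.
move=> subN Mtors; elim: s => [|x s [K [subK NK0 NKs]]].
  by exists (fun x => x = 0); split=> //; exact: submod_eq0.
have subNK := submod_sum_submod subN subK.
have [h [h_free [a [b [[a1 [a2 [Na1 [Ka2 ->]]]] [hb ->]]]]]] :=
  cyclic_complement subNK (Mtors x).
exists (sum_submod K (cyclic_submod h)); split.
- exact: submod_sum_submod subK (submod_cyclic h).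
- move=> y Ny [k [_ [Kk [[m ->] yE]]]].
  have hm0 : h *~ m = 0.
    apply: h_free; exists y, (- k); split=> //; split; first exact: submodN.
    by rewrite yE addrC addKr.
  by rewrite hm0 addr0 in yE; apply: NK0 Ny _; rewrite yE.
move=> z; rewrite inE => /predU1P [->|/NKs [a' [b' [Na' [Kb' ->]]]]].
  by exists a1, (a2 + b); rewrite addrA; split=> //; split=> //; exists a2, b.
exists a', b'; split=> //; split=> //.
by exists b', 0; split=> //; split; [exists 0; rewrite mulr0z | rewrite addr0].
Qed.

Lemma fg_semisimple : fin_gen M -> (forall x, torsion x) -> semisimple M.
Proof.
move=> [n [g g_gen]] Mtors N subN.
have [K [subK NK0 gNK]] := complement_covering (codom g) subN Mtors.
exists K; split=> //; split=> // x; have [c ->] := g_gen x.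
apply: (submod_sum (submod_sum_submod subN subK)) => i.
exact/gNK/codom_f.
Qed.

End SquareFreeExponent.

Theorem proposition2p9 (M : zmodType) :
  fin_gen M -> centrally_endo_AIP M -> torsion_free M \/ semisimple M.
Proof.
move=> Mfg aip.
have [|/not_torsion_free_prime [p [t [p_pr t_neq0 tp0]]]] := pselect (torsion_free M).
  by left.
have Mtors := fg_torsion_of_prime_torsion Mfg (aip _ (torsion_fully_invariant M))
  p_pr t_neq0 tp0.
right; apply: (fg_semisimple _ Mfg Mtors) => r u r_pr.
exact: fg_prime_sq_torsion Mfg Mtors (aip _ (multiples_fully_invariant M r)) r_pr.
Qed.
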